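(* Let $\alpha>0$. Suppose sequences $\{\bm{P}^k\}_{k\ge0}\subseteq\mathcal{B}(n,K)$ and $\{\bm{Y}^k\}_{k\ge0}\subseteq\mathbb{R}^{n\times K}$ satisfy $\bm{P}^{k+1}\in\operatorname{sign}(\bm{P}^k+\bm{Y}^k/\alpha)$ for all $k\ge0$, $\bm{P}^k\to\bm{P}^*$ and $\bm{Y}^k\to\bm{Y}^*$. Then $\bm{P}^*\in\operatorname{sign}(\bm{P}^*+\bm{Y}^*/\alpha)$. Moreover, for any $\bm{Y}\in\mathbb{R}^{n\times K}$ with $\bm{P}^*\in\operatorname{sign}(\bm{Y})$, we have $\bm{P}^*\in\operatorname{sign}(\bm{P}^*+\bm{Y}/\alpha)$.
   Context: $\mathcal{B}(n,K)$ is the set of $n\times K$ matrices with entries in $\{\pm1\}$. For $a\in\mathbb{R}$, $\operatorname{sign}(a)=\{a/|a|\}$ if $a\ne0$ and $\operatorname{sign}(0)=\{-1,1\}$; for a matrix $\bm{B}$, $\operatorname{sign}(\bm{B})$ is the set of matrices $\bm{\xi}$ with $\xi_{ij}\in\operatorname{sign}(B_{ij})$ for all $i,j$. *)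

From HB Require Import structures.
From mathcomp Require Import all_boot all_order all_algebra.
From mathcomp Require Import all_classical all_reals all_analysis.
Import Order.TTheory GRing.Theory Num.Theory.
Local Open Scope ring_scope.

Definition sign_set {R : realType} (a : R) : set R :=
  fun s => if a != 0 then s = a / `|a| else (s = -1 \/ s = 1).

Definition in_sign_mx {R : realType} {n K : nat} (xi B : 'M[R]_(n, K)) : Prop :=
  forall i j, sign_set (B i j) (xi i j).

Definition is_pm1_mx {R : realType} {n K : nat} (P : 'M[R]_(n, K)) : Prop :=
  forall i j, P i j = 1 \/ P i j = -1.

From HB Require Import structures.
From mathcomp Require Import all_boot all_order all_algebra.
From mathcomp Require Import all_classical all_reals all_analysis.
Import Order.TTheory GRing.Theory Num.Theory.
Import numFieldNormedType.Exports.
Local Open Scope ring_scope.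
Local Open Scope classical_set_scope.

(* For s = 1 or s = -1, membership s \in sign(a) is the closed condition
   s * a >= 0.  Hence s_(k+1) * a_k >= 0 passes to the limit, and limits of
   +-1 sequences are +-1.  For the second claim,
   P* (P* + Y/alpha) = 1 + P* Y / alpha >= 0 whenever P* Y >= 0. *)

Lemma sign_setE {R : realType} {a s : R} : s ^+ 2 = 1 ->
  sign_set a s <-> 0 <= s * a.
Proof.
move/eqP; rewrite sqrf_eq1 => /orP[] /eqP ->; rewrite /sign_set.
- rewrite mul1r; split.
  + case: ifP => [a0 h|/negbFE/eqP -> //].
    have : 0 < a / `|a| by rewrite -h ltr01.
    by rewrite pmulr_lgt0 ?invr_gt0 ?normr_gt0 // => /ltW.
  + move=> a_ge0; case: ifP => [a0|]; last by right.
    by rewrite ger0_norm // divff.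
- rewrite mulN1r oppr_ge0; split.
  + case: ifP => [a0 h|/negbFE/eqP -> //].
    have : a / `|a| < 0 by rewrite -h ltrN10.
    by rewrite pmulr_llt0 ?invr_gt0 ?normr_gt0 // => /ltW.
  + move=> a_le0; case: ifP => [a0|]; last by left.
    by rewrite ler0_norm // invrN mulrN divff.
Qed.

Lemma sign_set_shift {R : realType} (a c s : R) : s ^+ 2 = 1 -> 0 <= c ->
  sign_set a s -> sign_set (s + c * a) s.
Proof.
move=> s_sq c_ge0 /(sign_setE s_sq) sa_ge0; apply/(sign_setE s_sq).
by rewrite mulrDr -expr2 s_sq mulrCA addr_ge0 // mulr_ge0.
Qed.

Lemma pm1_cvg_sqr {R : realType} {u : nat -> R} {l : R} :
  (forall k, u k ^+ 2 = 1) -> u @ \oo --> l -> l ^+ 2 = 1.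
Proof.
move=> u_sq u_l; rewrite expr2.
have uu_l : (fun k => u k * u k) @ \oo --> l * l by apply: cvgM.
apply: (closed_cvg _ (@closed_eq R 1) _ _ uu_l).
by apply: filterE => k /=; rewrite -expr2.
Qed.

Lemma sign_set_cvg {R : realType} {s a : nat -> R} {s_lim a_lim : R} :
  (forall k, s k ^+ 2 = 1) -> (forall k, sign_set (a k) (s k.+1)) ->
  s @ \oo --> s_lim -> a @ \oo --> a_lim -> sign_set a_lim s_lim.
Proof.
move=> s_sq s_sign s_cvg a_cvg.
apply/(sign_setE (pm1_cvg_sqr s_sq s_cvg)).
have sa_cvg : (fun k => s k.+1 * a k) @ \oo --> s_lim * a_lim.
  by apply: cvgM => //; rewrite cvg_shiftS.
apply: (closed_cvg _ (@closed_ge R 0) _ _ sa_cvg).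
by apply: filterE => k; apply/sign_setE.
Qed.

Lemma cvg_mx_entry {R : realType} {m n : nat} {M : nat -> 'M[R]_(m, n)}
    {L : 'M[R]_(m, n)} (i : 'I_m) (j : 'I_n) :
  M @ \oo --> L -> (fun k => M k i j) @ \oo --> L i j.
Proof. by move=> ML; apply: cvg_comp _ _ ML (@coord_continuous R m n i j _). Qed.

Theorem lemma3 (R : realType) (n K : nat) (alpha : R) (Hal : 0 < alpha)
  (P Y : nat -> 'M[R]_(n, K)) (Pstar Ystar : 'M[R]_(n, K))
  (HPB : forall k, is_pm1_mx (P k))
  (Hiter : forall k, in_sign_mx (P k.+1) (P k + alpha^-1 *: Y k))
  (HPc : P @ \oo --> Pstar) (HYc : Y @ \oo --> Ystar) :
  in_sign_mx Pstar (Pstar + alpha^-1 *: Ystar) /\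
  (forall Y0 : 'M[R]_(n, K), in_sign_mx Pstar Y0 ->
     in_sign_mx Pstar (Pstar + alpha^-1 *: Y0)).
Proof.
have P_sq k i j : P k i j ^+ 2 = 1.
  by case: (HPB k i j) => ->; rewrite ?sqrrN expr1n.
split=> [i j | Y0 HY0 i j]; rewrite !mxE.
- pose a k := P k i j + alpha^-1 * Y k i j.
  apply: (sign_set_cvg (a := a) (fun k => P_sq k i j) _ (cvg_mx_entry i j HPc)).
  + by move=> k; have := Hiter k i j; rewrite !mxE.
  + apply: cvgD; first exact: cvg_mx_entry i j HPc.
    by apply: cvgMl_tmp; exact: cvg_mx_entry i j HYc.
- apply: sign_set_shift => //.
    exact: pm1_cvg_sqr (fun k => P_sq k i j) (cvg_mx_entry i j HPc).
  by rewrite invr_ge0 ltW.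
Qed.
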